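(* Let $A=k_{p_{ij}}[x_1,\dots,x_n]$ and let $G$ be a finite subgroup of $\mathrm{Aut}(A)$ generated by quasi-reflections such that $[n]$ is a circle for $G$. Then after replacing each $x_i$ by a suitable nonzero scalar multiple $c_ix_i$ (which leaves the relations $x_jx_i=p_{ij}x_ix_j$ unchanged), one has $\tau_{i,j,1}\in G$ for all $i\ne j$ in $[n]$. Consequently $p_{ij}=-1$ for all $i<j$.
   Context: $k$ is algebraically closed of characteristic zero, $n\ge2$, $[n]=\{1,\dots,n\}$. $A=k_{p_{ij}}[x_1,\dots,x_n]$ is generated by $x_1,\dots,x_n$ with $x_jx_i=p_{ij}x_ix_j$ ($i<j$), nonzero $p_{ij}$, $\deg x_i=1$; $p_{ii}=1$, $p_{ij}=p_{ji}^{-1}$ for $i>j$. $\mathrm{Aut}(A)$: graded algebra automorphisms; $g$ is a quasi-reflection if $\sum_i\mathrm{tr}(g|_{A_i})t^i=\frac1{(1-t)^{n-1}(1-\lambda t)}$ with $\lambda\ne1$. For $s,t$ with $p_{st}=-1$ and $p_{sj}=p_{tj}$ ($j\ne s,t$) and $\lambda\in k^\times$, $\tau_{s,t,\lambda}$ is the automorphism with $x_s\mapsto\lambda x_t$, $x_t\mapsto-\lambda^{-1}x_s$, $x_i\mapsto x_i$ otherwise. $[n]$ is a circle for $G$ if for each pair of distinct $i,j\in[n]$ there are $\tau_{i_s,j_s,\lambda_s}\in G$, $s=0,\dots,t$, with $i_0=i$, $i_{s+1}=j_s$, $j_t=j$. *)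

From HB Require Import structures.
From mathcomp Require Import all_boot all_order all_algebra.
Set Implicit Arguments. Unset Strict Implicit. Unset Printing Implicit Defensive.
Import Order.TTheory GRing.Theory Num.Theory.
Local Open Scope ring_scope.

(* Concrete model of A = k_{p_ij}[x_1..x_n] (indices 'I_n = {0..n-1}).
   A has the PBW basis of ordered monomials x^a, a : 'I_n -> nat.
   A word x_{w_1} ... x_{w_d} equals coefw p w * x^{count w}, where
   coefw collects p_{w_t w_s} for every inversion s < t, w_s > w_t
   (from x_j x_i = p_ij x_i x_j, i < j). *)

Definition coefw {k : fieldType} {n : nat} (p : 'I_n -> 'I_n -> k) (d : nat)
  (w : d.-tuple 'I_n) : k :=
  \prod_(s < d) \prod_(t < d | (s < t)%N && (tnth w t < tnth w s)%N)
     p (tnth w t) (tnth w s).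

(* Coefficient of the basis monomial x^a in the product L_1 L_2 ... L_d of
   degree-one elements L_t = sum_j L_t(j) x_j of A. *)
Definition prodA {k : fieldType} {n : nat} (p : 'I_n -> 'I_n -> k)
  (L : seq ('I_n -> k)) (a : 'I_n -> nat) : k :=
  \sum_(w : (size L).-tuple 'I_n | [forall i, count_mem i w == a i])
     (\prod_(t < size L) (nth (fun _ => 0) L t) (tnth w t)) * coefw p w.

(* A graded automorphism g is determined by its degree-one part, the matrix
   g with g(x_i) = sum_j g j i x_j (column i = image of x_i). *)
Definition gcol {k : fieldType} {n : nat} (g : 'M[k]_n) (i : 'I_n) : 'I_n -> k :=
  fun j => g j i.

(* g (invertible on A_1) induces a graded algebra automorphism of A iff it
   preserves the defining relations: g(x_j) g(x_i) = p_ij g(x_i) g(x_j). *)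
Definition is_gr_aut {k : fieldType} {n : nat} (p : 'I_n -> 'I_n -> k)
  (g : 'M[k]_n) : Prop :=
  g \in unitmx /\
  forall i j : 'I_n, (i < j)%N -> forall a : 'I_n -> nat,
    prodA p [:: gcol g j; gcol g i] a = p i j * prodA p [:: gcol g i; gcol g j] a.

(* tr(g | A_d): sum over ordered monomials x_{u_1}...x_{u_d} (u sorted) of the
   coefficient of that monomial in g(x_{u_1}) ... g(x_{u_d}). *)
Definition trA {k : fieldType} {n : nat} (p : 'I_n -> 'I_n -> k)
  (g : 'M[k]_n) (d : nat) : k :=
  \sum_(u : d.-tuple 'I_n | sorted (fun x y : 'I_n => (x <= y)%N) u)
     prodA p (map (gcol g) u) (fun i => count_mem i u).

(* quasi-reflection: Hilbert trace series = 1/((1-t)^(n-1)(1-lambda t)),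
   written coefficientwise: coefficient of t^d is
   sum_{m=0}^d lambda^m * C(d-m+n-2, n-2). *)
Definition quasi_reflection {k : fieldType} {n : nat} (p : 'I_n -> 'I_n -> k)
  (g : 'M[k]_n) : Prop :=
  exists lam : k, lam != 1 /\
    forall d : nat, trA p g d =
      \sum_(m < d.+1) lam ^+ m * ('C(d - m + n - 2, n - 2))%:R.

(* matrix of tau_{s,t,lam}: x_s |-> lam x_t, x_t |-> - lam^-1 x_s, x_i |-> x_i. *)
Definition taumx {k : fieldType} {n : nat} (s t : 'I_n) (lam : k) : 'M[k]_n :=
  \matrix_(j, i) (if i == s then (if j == t then lam else 0)
                  else if i == t then (if j == s then - lam^-1 else 0)
                  else (j == i)%:R).

(* tau_{s,t,lam} is defined (and belongs to G) *)
Definition tau_in {k : fieldType} {n : nat} (p : 'I_n -> 'I_n -> k)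
  (G : seq 'M[k]_n) (s t : 'I_n) (lam : k) : Prop :=
  [/\ s != t, lam != 0, p s t = -1,
      (forall j : 'I_n, j != s -> j != t -> p s j = p t j)
    & taumx s t lam \in G].

Inductive tau_chain {k : fieldType} {n : nat} (p : 'I_n -> 'I_n -> k)
  (G : seq 'M[k]_n) : 'I_n -> 'I_n -> Prop :=
| tc_one s t lam : tau_in p G s t lam -> tau_chain p G s t
| tc_cons s t lam j : tau_in p G s t lam -> tau_chain p G t j -> tau_chain p G s j.

Definition is_circle {k : fieldType} {n : nat} (p : 'I_n -> 'I_n -> k)
  (G : seq 'M[k]_n) : Prop :=
  forall i j : 'I_n, i != j -> tau_chain p G i j.

Definition finite_aut_subgroup {k : fieldType} {n : nat} (p : 'I_n -> 'I_n -> k)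
  (G : seq 'M[k]_n) : Prop :=
  [/\ forall g, g \in G -> is_gr_aut p g,
      1%:M \in G,
      forall g h, g \in G -> h \in G -> g *m h \in G
    & forall g, g \in G -> invmx g \in G].

Definition gen_by_qr {k : fieldType} {n : nat} (p : 'I_n -> 'I_n -> k)
  (G : seq 'M[k]_n) : Prop :=
  forall g, g \in G -> exists hs : seq 'M[k]_n,
    (forall h, h \in hs -> h \in G /\ quasi_reflection p h) /\
    g = foldr (fun a b => a *m b) 1%:M hs.

(** Conjugating by the rescaling [x_i |-> c_i x_i] turns [tau_{s,t,1}] into
    [tau_{s,t,c_t/c_s}], so it suffices to find [c] with [tau_{i,j,c_j/c_i}]
    in [G] for all [i != j].  The identities [tau_{s,t,l}^3 = tau_{s,t,-l}],
    [tau_{s,t,l} = tau_{t,s,-1/l}] and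
    [tau_{a,b,l} tau_{b,c,m} tau_{a,b,-l} = tau_{a,c,-lm}] show that the
    scalars [l] with [tau_{i,j,l}] in [G] are closed under negation,
    inversion and composition.  A chain from a fixed index [o] to [x] thus
    gives [tau_{o,x,c_x}] in [G], and composing through [o] yields
    [tau_{i,j,c_j/c_i}].  Along a chain [p_ij = -1] propagates because
    [p_{sj} = p_{tj}] whenever [tau_{s,t,l}] is defined. *)

From HB Require Import structures.
From mathcomp Require Import all_boot all_order all_algebra.
From mathcomp Require Import ring.
Set Implicit Arguments.
Unset Strict Implicit.
Unset Printing Implicit Defensive.
Import GRing.Theory.
Local Open Scope ring_scope.

Section TauMatrices.

Variables (k : fieldType) (n : nat).
Implicit Types (s t : 'I_n) (l m : k).

(* [taumx s t l] is the monomial matrix of the permutation [tau_perm s t]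
   with column weights [tau_weight s t l]. *)
Definition tau_perm s t (q : 'I_n) : 'I_n :=
  if q == s then t else if q == t then s else q.

Definition tau_weight s t l (q : 'I_n) : k :=
  if q == s then l else if q == t then - l^-1 else 1.

Lemma taumxE s t l j i : s != t ->
  taumx s t l j i = if j == tau_perm s t i then tau_weight s t l i else 0.
Proof.
move=> st; rewrite /taumx mxE /tau_perm /tau_weight.
have [//|_] := eqVneq i s; have [//|_] := eqVneq i t.
by case: eqVneq.
Qed.

Lemma mulmx_taumxE (A : 'M[k]_n) s t l r q : s != t ->
  (A *m taumx s t l) r q = A r (tau_perm s t q) * tau_weight s t l q.
Proof.
move=> st; rewrite mxE (bigD1 (tau_perm s t q)) //= taumxE // eqxx big1 ?addr0 //.
by move=> j /negbTE hj; rewrite taumxE // hj mulr0.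
Qed.

(* Entrywise identities between such matrices reduce, after splitting on
   all equalities between the index variables, to field identities. *)
Local Ltac split_indices :=
  repeat (rewrite ?eqxx /=; match goal with
  | H : is_true (?x != ?x) |- _ => by rewrite eqxx in H
  | |- context [@eq_op _ ?x ?y] =>
      is_var x; is_var y;
      let E := fresh "E" in
      have [E|E] := eqVneq x y; [subst x|]
  end); rewrite ?eqxx /=.

Local Ltac close_field :=
  try (field; rewrite ?oppr_eq0 ?invr_eq0 ?oner_eq0 ?andbT ?andTb /=;
       repeat (apply/andP; split); rewrite ?oppr_eq0 ?invr_eq0 ?oner_eq0 //;
       try (apply: mulf_neq0; assumption)); try ring.

Lemma taumx_cube s t l : s != t -> l != 0 ->
  taumx s t l *m taumx s t l *m taumx s t l = taumx s t (- l).
Proof.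
move=> st l0; apply/matrixP => r q.
rewrite !mulmx_taumxE // !taumxE // /tau_perm /tau_weight.
by split_indices; close_field.
Qed.

Lemma taumx_sym s t l : s != t -> l != 0 -> taumx s t l = taumx t s (- l^-1).
Proof.
move=> st l0; apply/matrixP => r q.
have ts : t != s by rewrite eq_sym.
rewrite !taumxE // /tau_perm /tau_weight.
by split_indices; close_field.
Qed.

Lemma taumx_conj (a b c : 'I_n) l m : a != b -> b != c -> a != c ->
    l != 0 -> m != 0 ->
  taumx a b l *m taumx b c m *m taumx a b (- l) = taumx a c (- (l * m)).
Proof.
move=> ab bc ac l0 m0; apply/matrixP => r q.
rewrite !mulmx_taumxE // !taumxE // /tau_perm /tau_weight.
by split_indices; close_field.
Qed.

Lemma diag_mx_taumx (d : 'I_n -> k) s t : s != t -> (forall x, d x != 0) ->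
  diag_mx (\row_x d x) *m taumx s t 1 = taumx s t (d t / d s) *m diag_mx (\row_x d x).
Proof.
move=> st d0; apply/matrixP => r q.
rewrite mul_diag_mx mul_mx_diag !mxE.
have ds := d0 s; have dt := d0 t.
by split_indices; close_field.
Qed.

End TauMatrices.

Section TauChains.

Variables (k : fieldType) (n : nat) (p : 'I_n -> 'I_n -> k) (G : seq 'M[k]_n).
Hypothesis mulG : forall g h, g \in G -> h \in G -> g *m h \in G.

Definition tau_mem (s t : 'I_n) (l : k) := (l != 0) && (taumx s t l \in G).

Lemma tau_memN s t l : s != t -> tau_mem s t l -> tau_mem s t (- l).
Proof.
move=> st /andP[l0 Gl].
by rewrite /tau_mem oppr_eq0 l0 -taumx_cube // !mulG.
Qed.

Lemma tau_memV s t l : s != t -> tau_mem s t l -> tau_mem t s l^-1.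
Proof.
move=> st /andP[l0 Gl].
rewrite -[l^-1]opprK; apply: tau_memN; first by rewrite eq_sym.
by rewrite /tau_mem oppr_eq0 invr_eq0 l0 -taumx_sym.
Qed.

Lemma tau_memM a b c l m : a != b -> b != c -> a != c ->
  tau_mem a b l -> tau_mem b c m -> tau_mem a c (l * m).
Proof.
move=> ab bc ac /[dup] /andP[l0 Gl] /(tau_memN ab) /andP[_ Gl'] /andP[m0 Gm].
rewrite -[l * m]opprK; apply: tau_memN => //.
by rewrite /tau_mem oppr_eq0 mulf_neq0 // -(taumx_conj ab bc ac l0 m0) !mulG.
Qed.

Lemma tau_chain_mem s t : tau_chain p G s t -> s != t -> exists l, tau_mem s t l.
Proof.
elim=> {s t} [s t l [_ l0 _ _ Gl] _ | s u l t [su l0 _ _ Gl] _ IH st].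
  by exists l; rewrite /tau_mem l0.
have Ml : tau_mem s u l by rewrite /tau_mem l0.
have [<-|ut] := eqVneq u t; first by exists l.
by have [m Mm] := IH ut; exists (l * m); apply: tau_memM Mm.
Qed.

Lemma tau_chain_pm1 s t : tau_chain p G s t -> s != t -> p s t = -1.
Proof.
elim=> {s t} [s t l [] // | s u l t [su _ psu pu _] _ IH st].
have [<-//|ut] := eqVneq u t.
by rewrite pu ?IH // eq_sym.
Qed.

Lemma tau_mem_rescale (o : 'I_n) :
    (forall x, x != o -> exists l, tau_mem o x l) ->
  exists c : 'I_n -> k,
    (forall x, c x != 0) /\ forall i j, i != j -> tau_mem i j (c j / c i).
Proof.
move=> from_o.
have [c cP] : exists c : 'I_n -> k,
    forall x, if x == o then c x = 1 else tau_mem o x (c x).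
  apply: (@fin_all_exists _ (fun=> k) (fun x l => if x == o then l = 1 else tau_mem o x l)).
  by move=> x; case: eqVneq => [_|/from_o//]; exists 1.
have co : c o = 1 by have := cP o; rewrite eqxx.
have Mo x : x != o -> tau_mem o x (c x) by move=> xo; have := cP x; rewrite (negbTE xo).
have c0 x : c x != 0.
  by have [->|/Mo /andP[]//] := eqVneq x o; rewrite co oner_eq0.
exists c; split => // i j ij.
have [eio|io] := eqVneq i o; first by rewrite eio co divr1 Mo // -eio eq_sym.
have oi : o != i by rewrite eq_sym.
have Mio : tau_mem i o (c i)^-1 by apply: tau_memV (Mo _ io).
have [->|jo] := eqVneq j o; first by rewrite co div1r.
by rewrite mulrC; apply: tau_memM Mio (Mo _ jo); rewrite // eq_sym.
Qed.

End TauChains.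

Theorem lemma4p1 (k : closedFieldType) (hchar : [pchar k] =i pred0)
  (n : nat) (hn : (2 <= n)%N) (p : 'I_n -> 'I_n -> k)
  (hpii : forall i, p i i = 1)
  (hpinv : forall i j : 'I_n, (j < i)%N -> p i j = (p j i)^-1)
  (hp0 : forall i j, p i j != 0)
  (G : seq 'M[k]_n)
  (hG : finite_aut_subgroup p G)
  (hgen : gen_by_qr p G)
  (hcirc : is_circle p G) :
  exists c : 'I_n -> k, (forall i, c i != 0) /\
    (forall i j : 'I_n, i != j ->
       diag_mx (\row_l c l) *m taumx i j 1 *m invmx (diag_mx (\row_l c l)) \in G) /\
    (forall i j : 'I_n, (i < j)%N -> p i j = -1).
Proof.
case: hG => _ _ mulG _.
have o : 'I_n by exists 0%N; apply: leq_trans hn.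
have from_o x : x != o -> exists l, tau_mem G o x l.
  rewrite eq_sym => ox; exact: (tau_chain_mem mulG (hcirc _ _ ox) ox).
have [c [c0 Mc]] := tau_mem_rescale mulG from_o.
exists c; split=> //; split=> [i j ij | i j ij].
  have unit_c : diag_mx (\row_l c l) \in unitmx.
    by rewrite unitmxE det_diag unitfE; apply/prodf_neq0 => x _; rewrite mxE.
  by rewrite diag_mx_taumx // mulmxK //; have /andP[] := Mc i j ij.
have ij' : i != j by rewrite neq_ltn ij.
exact: tau_chain_pm1 (hcirc _ _ ij') ij'.
Qed.
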